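(* In the setting described in the context, assume $c>\max\{0.56\,b^3,\,0.001\,a_2^2b^2\}$ and $b>10^5$. If $z=v_m=w_n$ for some integers $m,n$ with $n\geq 4$, then $m\equiv n\pmod 2$; moreover $n>0.09226\,b^{-1/2}c^{1/4}$ if $n$ is odd, and $n>0.340134\,b^{-1/2}c^{1/2}$ if $n$ is even.
   Context: A $D(4)$-quadruple is a set of four distinct positive integers such that the product of any two distinct elements increased by $4$ is a perfect square. Setting: $a_1<a_2<b<c<d$ are positive integers such that $\{a_1,b,c,d\}$ and $\{a_2,b,c,d\}$ are $D(4)$-quadruples. Let $r_2,s_2,t,z$ be the positive integers with $a_2b+4=r_2^2$, $a_2c+4=s_2^2$, $bc+4=t^2$, $cd+4=z^2$. For integers $z_{(0)},x_{(0)},z_{(1)},y_{(1)}$ define the sequences $v_0=z_{(0)}$, $v_1=\frac12(s_2z_{(0)}+cx_{(0)})$, $v_{m+2}=s_2v_{m+1}-v_m$, and $w_0=z_{(1)}$, $w_1=\frac12(tz_{(1)}+cy_{(1)})$, $w_{n+2}=tw_{n+1}-w_n$. The value $z$ admits a representation $z=v_m=w_n$ with nonnegative integers $m,n$ where either (i) $m\equiv n\equiv 0\pmod 2$, $x_{(0)}=y_{(1)}=2$, $|z_{(0)}|=|z_{(1)}|=2$, $z_{(0)}z_{(1)}>0$; or (ii) $m\equiv n\equiv 1\pmod 2$, $x_{(0)}=y_{(1)}=r_2$, $|z_{(0)}|=t$, $|z_{(1)}|=s_2$, $z_{(0)}z_{(1)}>0$. The statement ''$z=v_m=w_n$'' refers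 to such a representation. *)

From Stdlib Require Import ZArith Reals Lia Lra.
Open Scope R_scope.

Definition is_square (x : Z) : Prop := exists k : Z, x = (k * k)%Z.

Definition D4_quadruple (a b c d : Z) : Prop :=
  (0 < a)%Z /\ (0 < b)%Z /\ (0 < c)%Z /\ (0 < d)%Z /\
  a <> b /\ a <> c /\ a <> d /\ b <> c /\ b <> d /\ c <> d /\
  is_square (a * b + 4) /\ is_square (a * c + 4) /\ is_square (a * d + 4) /\
  is_square (b * c + 4) /\ is_square (b * d + 4) /\ is_square (c * d + 4).

Fixpoint rec2_aux (P u0 u1 : R) (k : nat) : R * R :=
  match k with
  | O => (u0, u1)
  | S k' => let (x, y) := rec2_aux P u0 u1 k' in (y, P * y - x)
  end.

Definition rec2 (P u0 u1 : R) (k : nat) : R := fst (rec2_aux P u0 u1 k).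

Definition vseq (s2 c z0 x0 : Z) : nat -> R :=
  rec2 (IZR s2) (IZR z0) ((IZR s2 * IZR z0 + IZR c * IZR x0) / 2).

Definition wseq (t c z1 y1 : Z) : nat -> R :=
  rec2 (IZR t) (IZR z1) ((IZR t * IZR z1 + IZR c * IZR y1) / 2).

(* "z = v_m = w_n": a representation of z as described in the setting,
   case (i) or case (ii). *)
Definition z_rep (c r2 s2 t z : Z) (m n : nat) : Prop :=
  exists z0 x0 z1 y1 : Z,
    IZR z = vseq s2 c z0 x0 m /\ IZR z = wseq t c z1 y1 n /\
    ( (Nat.even m = true /\ Nat.even n = true /\ x0 = 2%Z /\ y1 = 2%Z /\
       Z.abs z0 = 2%Z /\ Z.abs z1 = 2%Z /\ (z0 * z1 > 0)%Z)
   \/ (Nat.odd m = true /\ Nat.odd n = true /\ x0 = r2 /\ y1 = r2 /\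
       Z.abs z0 = t /\ Z.abs z1 = s2 /\ (z0 * z1 > 0)%Z) ).

(* Both v and w are solutions of second-order linear recurrences
   u_{k+2} = P u_{k+1} - u_k with P^2 = ac + 4 (P = s2, a = a2) resp. P^2 = bc + 4
   (P = t, a = b).  The parity claim m = n (mod 2) is part of the representation.
   1. Congruences: modulo c^2, u_{2k} and u_{2k+1} are explicit polynomials in k
      ([zrec_even_cong], [zrec_odd_cong]); equating v_m and w_n gives a linear
      relation modulo c between the two indices ([even/odd_meeting_congruence]).
   2. Growth: solutions grow between (P-1)^k and (P+1)^k ([rec_meet_bound]); since
      t + 1 <= (s2 - 1)^2 this forces M <= 2N ([even_index_bound], [odd_growth]).
   3. Assuming the claimed lower bound on n fails, every term of the linear relation
      is smaller than c, so the relation holds exactly.  In the even case this is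
      impossible outright ([even_case_impossible]); in the odd case it yields
      M > N and a M(M+1) >= b(N(N+1) - (M - N)) ([odd_index_order]), which
      contradicts the growth inequality (s2-1)^(2M) <= (t+1)^(2N) after taking
      logarithms ([odd_log_contradiction]).
   Besides the representation, only the definitions of r2, s2, t and the size
   hypotheses on b and c are used. *)

From Stdlib Require Import ZArith Reals Lia Lra Psatz.
Open Scope R_scope.

Lemma rec2_SS (P u0 u1 : R) (k : nat) :
  rec2 P u0 u1 (S (S k)) = P * rec2 P u0 u1 (S k) - rec2 P u0 u1 k.
Proof.
  unfold rec2; simpl.
  destruct (rec2_aux P u0 u1 k) as [x y]; reflexivity.
Qed.

Lemma rec_unique (f g : nat -> R) (P : R) :
  (forall k, f (S (S k)) = P * f (S k) - f k) ->
  (forall k, g (S (S k)) = P * g (S k) - g k) ->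
  f 0%nat = g 0%nat -> f 1%nat = g 1%nat -> forall k, f k = g k.
Proof.
  intros Hf Hg H0 H1.
  assert (Hpair : forall k, f k = g k /\ f (S k) = g (S k)).
  { induction k as [|k [IH1 IH2]]; [split; assumption|].
    split; [assumption|]. rewrite Hf, Hg, IH1, IH2; reflexivity. }
  intro k; apply Hpair.
Qed.

Fixpoint zrec (P u0 u1 : Z) (k : nat) : Z :=
  match k with
  | O => u0
  | S O => u1
  | S (S k' as k1) => (P * zrec P u0 u1 k1 - zrec P u0 u1 k')%Z
  end.

Lemma zrec_SS (P u0 u1 : Z) (k : nat) :
  zrec P u0 u1 (S (S k)) = (P * zrec P u0 u1 (S k) - zrec P u0 u1 k)%Z.
Proof. reflexivity. Qed.

Lemma zrec_IZR (P u0 u1 : Z) (k : nat) :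
  IZR (zrec P u0 u1 k) = rec2 (IZR P) (IZR u0) (IZR u1) k.
Proof.
  revert k; apply (rec_unique _ _ (IZR P)); try reflexivity.
  - intro k. rewrite zrec_SS, minus_IZR, mult_IZR; reflexivity.
  - intro k. apply rec2_SS.
Qed.

Lemma vseq_double (s c z0 x0 : Z) (k : nat) :
  2 * vseq s c z0 x0 k = IZR (zrec s (2 * z0) (s * z0 + c * x0) k).
Proof.
  rewrite zrec_IZR. unfold vseq. revert k.
  apply (rec_unique _ _ (IZR s)).
  - intro k. rewrite rec2_SS. ring.
  - intro k. apply rec2_SS.
  - rewrite mult_IZR. reflexivity.
  - rewrite plus_IZR, !mult_IZR. cbn. field.
Qed.

Lemma vseq_SS (s c z0 x0 : Z) (k : nat) :
  vseq s c z0 x0 (S (S k)) = IZR s * vseq s c z0 x0 (S k) - vseq s c z0 x0 k.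
Proof. apply rec2_SS. Qed.

Open Scope Z_scope.

Lemma zrec_SSSS (P u0 u1 : Z) (k : nat) :
  zrec P u0 u1 (S (S (S (S k)))) = (P * P - 2) * zrec P u0 u1 (S (S k)) - zrec P u0 u1 k.
Proof. rewrite !zrec_SS. ring. Qed.

Fixpoint tri (k : nat) : Z := match k with O => 0 | S k' => tri k' + Z.of_nat (S k') end.

Lemma tri_double (k : nat) : 2 * tri k = Z.of_nat k * (Z.of_nat k + 1).
Proof. induction k as [|k IH]; [reflexivity|]. cbn [tri]. rewrite Nat2Z.inj_succ. nia. Qed.

Section Congruences.
Variables P a c z x : Z.
Hypothesis HP : P * P = a * c + 4.
Let u : nat -> Z := zrec P (2 * z) (P * z + c * x).

Lemma zrec_even_cong (k : nat) :
  exists q, u (2 * k)%nat = 2 * z + c * (a * z * Z.of_nat k ^ 2 + P * x * Z.of_nat k) + c ^ 2 * q.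
Proof.
  set (F := fun k : nat => 2 * z + c * (a * z * Z.of_nat k ^ 2 + P * x * Z.of_nat k)).
  enough (H : forall k, (exists q, u (2 * k)%nat = F k + c ^ 2 * q) /\
                        (exists q, u (2 * S k)%nat = F (S k) + c ^ 2 * q)) by exact (proj1 (H k)).
  clear k; unfold F; intro k; induction k as [|k [[q0 H0] [q1 H1]]]; split.
  - exists 0. cbn. ring.
  - exists 0. unfold u; cbn -[Z.mul Z.add Z.sub Z.pow].
    transitivity ((P * P) * z + P * c * x - 2 * z); [ring|]. rewrite HP. ring.
  - exists q1; exact H1.
  - exists (a * (a * z * Z.of_nat (S k) ^ 2 + P * x * Z.of_nat (S k)) + a * c * q1 + 2 * q1 - q0).
    replace (2 * S (S k))%nat with (S (S (S (S (2 * k)))))%nat by lia.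
    unfold u; rewrite zrec_SSSS.
    replace (S (S (2 * k)))%nat with (2 * S k)%nat by lia.
    fold u; rewrite H1, H0, HP, !Nat2Z.inj_succ. ring.
Qed.

Lemma zrec_odd_cong (k : nat) :
  exists q, u (2 * k + 1)%nat = P * z + c * (x + a * P * z * tri k + 2 * x * Z.of_nat k) + c ^ 2 * q.
Proof.
  set (F := fun k : nat => P * z + c * (x + a * P * z * tri k + 2 * x * Z.of_nat k)).
  enough (H : forall k, (exists q, u (2 * k + 1)%nat = F k + c ^ 2 * q) /\
                        (exists q, u (2 * S k + 1)%nat = F (S k) + c ^ 2 * q)) by exact (proj1 (H k)).
  clear k; unfold F; intro k; induction k as [|k [[q0 H0] [q1 H1]]]; split.
  - exists 0. cbn. ring.
  - exists (a * x). unfold u; cbn -[Z.mul Z.add Z.sub Z.pow].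
    transitivity ((P * P) * (P * z) + (P * P) * c * x - 3 * P * z - c * x); [ring|].
    rewrite HP. ring.
  - exists q1; exact H1.
  - exists (a * (x + a * P * z * tri (S k) + 2 * x * Z.of_nat (S k)) + a * c * q1 + 2 * q1 - q0).
    replace (2 * S (S k) + 1)%nat with (S (S (S (S (2 * k + 1)))))%nat by lia.
    unfold u; rewrite zrec_SSSS.
    replace (S (S (2 * k + 1)))%nat with (2 * S k + 1)%nat by lia.
    fold u; rewrite H1, H0, HP. cbn [tri]. rewrite !Nat2Z.inj_succ. ring.
Qed.

End Congruences.

Open Scope R_scope.

Section Growth.
Variables (f : nat -> R) (P : R).
Hypothesis Hrec : forall k, f (S (S k)) = P * f (S k) - f k.
Hypothesis HP : 2 <= P.
Hypothesis Hf0 : 0 <= f 0%nat.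
Hypothesis Hf1 : (P - 1) * f 0%nat <= f 1%nat.

Lemma rec_lower_invariant (k : nat) :
  (P - 1) ^ k * f 0%nat <= f k /\ 0 <= f k /\ (P - 1) * f k <= f (S k).
Proof.
  induction k as [|k [IH1 [IH2 IH3]]]; [cbn; lra|].
  assert (0 <= f (S k)) by nra.
  split; [|split; [assumption|]].
  - cbn. nra.
  - rewrite Hrec. nra.
Qed.

Lemma rec_nonneg (k : nat) : 0 <= f k.
Proof. apply rec_lower_invariant. Qed.

Lemma rec_lower (k : nat) : (P - 1) ^ k * f 0%nat <= f k.
Proof. apply rec_lower_invariant. Qed.

Lemma rec_upper (Hf1' : f 1%nat <= (P + 1) * f 0%nat) (k : nat) :
  f k <= (P + 1) ^ k * f 0%nat.
Proof.
  assert (Hinv : forall j, f j <= (P + 1) ^ j * f 0%nat /\ f (S j) <= (P + 1) * f j).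
  { intro j; induction j as [|j [IH1 IH2]]; [cbn; lra|].
    pose proof (rec_nonneg j). pose proof (rec_nonneg (S j)).
    split; [cbn; nra|]. rewrite Hrec. nra. }
  exact (proj1 (Hinv k)).
Qed.

End Growth.

Lemma rec_meet_bound (f g : nat -> R) (p q : R) (K L : nat) :
  (forall k, f (S (S k)) = p * f (S k) - f k) ->
  (forall k, g (S (S k)) = q * g (S k) - g k) ->
  2 <= p -> 2 <= q -> 0 <= f 0%nat -> 0 <= g 0%nat ->
  (p - 1) * f 0%nat <= f 1%nat ->
  (q - 1) * g 0%nat <= g 1%nat <= (q + 1) * g 0%nat ->
  f K = g L -> (p - 1) ^ K * f 0%nat <= (q + 1) ^ L * g 0%nat.
Proof.
  intros Hf Hg Hp Hq Hf0 Hg0 Hf1 [Hg1 Hg1'] Hmeet.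
  apply Rle_trans with (f K); [apply rec_lower; assumption|].
  rewrite Hmeet. apply rec_upper; assumption.
Qed.

Lemma pow_index_gap (x y A B : R) (K L j : nat) :
  1 <= x -> 0 < y -> y <= x ^ 2 -> 0 <= A -> (2 * L + 2 + j <= K)%nat ->
  x ^ K * A <= y ^ L * B -> y * x ^ j * A <= B.
Proof.
  intros Hx Hy Hyx HA HK Hpow.
  assert (Hyl : 0 < y ^ L) by (apply pow_lt; lra).
  assert (Hstep : y ^ L * (y * x ^ j) <= x ^ K).
  { apply Rle_trans with ((x ^ 2) ^ (S L) * x ^ j).
    - replace (y ^ L * (y * x ^ j)) with (y ^ S L * x ^ j) by (cbn; ring).
      apply Rmult_le_compat_r; [apply pow_le; lra|].
      apply pow_incr; lra.
    - rewrite <- pow_mult, <- pow_add. apply Rle_pow; [assumption | lia]. }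
  apply Rmult_le_reg_l with (y ^ L); [assumption|].
  assert (0 <= y * x ^ j * A) by (apply Rmult_le_pos; [apply Rmult_le_pos; [lra | apply pow_le; lra] | assumption]).
  nra.
Qed.

Lemma ln_le_mono (x y : R) : 0 < x -> x <= y -> ln x <= ln y.
Proof.
  intros Hx [Hlt | ->]; [left; apply ln_increasing | right]; auto.
Qed.

Lemma ln_le_tangent (x y : R) : 0 < x -> 0 < y -> ln x <= ln y + (x - y) / y.
Proof.
  intros Hx Hy.
  replace x with (y * (x / y)) at 1 by (field; lra).
  rewrite ln_mult by (try apply Rdiv_lt_0_compat; lra).
  pose proof (exp_ineq1_le (ln (x / y))) as Hexp.
  rewrite exp_ln in Hexp by (apply Rdiv_lt_0_compat; lra).
  replace ((x - y) / y) with (x / y - 1) by (field; lra). lra.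
Qed.

Lemma mul_ln_le (K u v : R) :
  0 <= K -> 0 < u -> 0 < v -> K * (v - u) <= u / 2 -> K * ln v <= K * ln u + 1 / 2.
Proof.
  intros HK Hu Hv Hclose.
  pose proof (ln_le_tangent v u Hv Hu) as Htan.
  assert (K * ((v - u) / u) <= 1 / 2).
  { apply Rmult_le_reg_r with u; [assumption|].
    replace (K * ((v - u) / u) * u) with (K * (v - u)) by (field; lra). lra. }
  nra.
Qed.

(* Since e <= 3, ln x >= 10 as soon as x >= 3^10; we use a round bound. *)
Lemma ln_ge_10 (x : R) : 10000000000 <= x -> 10 <= ln x.
Proof.
  intro Hx.
  assert (Hln3 : 1 <= ln 3).
  { rewrite <- ln_exp with 1. apply ln_le_mono; [apply exp_pos | apply exp_le_3]. }
  assert (Hpow : ln (3 ^ 10) <= ln x) by (apply ln_le_mono; [apply pow_lt | cbn]; lra).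
  rewrite ln_pow in Hpow by lra. cbn in Hpow. lra.
Qed.

(* For M = N + j with 1 <= j <= N, the quotient M(M+1) / (N(N+1) - j) is at most
   1 + 8j/N: the triangular numbers of M and N are close. *)
Lemma triangle_quotient_bound (N j : R) :
  1 <= j -> j <= N ->
  N * ((N + j) * (N + j + 1) - (N * (N + 1) - j)) <= 8 * j * (N * (N + 1) - j).
Proof.
  intros Hj HjN.
  replace (N * ((N + j) * (N + j + 1) - (N * (N + 1) - j))) with (j * (N * (2 * N + j + 2))) by ring.
  replace (8 * j * (N * (N + 1) - j)) with (j * (8 * (N * (N + 1) - j))) by ring.
  apply Rmult_le_compat_l; nra.
Qed.

Lemma ln_ratio_bound (a b N j : R) :
  0 < a -> 0 < b -> 1 <= j -> j <= N ->
  a * (N + j) * (N + j + 1) >= b * (N * (N + 1) - j) ->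
  N * ln b <= N * ln a + 8 * j.
Proof.
  intros Ha Hb Hj HjN Htri.
  set (M := N + j) in *. set (K := N * (N + 1) - j) in *.
  assert (HK : 0 < K) by (unfold K; nra).
  assert (HMM : 0 < M * (M + 1)) by (unfold M; nra).
  assert (Hln : ln b + ln K <= ln a + ln (M * (M + 1))).
  { rewrite <- !ln_mult by lra.
    apply ln_le_mono; [apply Rmult_lt_0_compat | rewrite <- Rmult_assoc]; lra. }
  pose proof (ln_le_tangent (M * (M + 1)) K HMM HK) as Htan.
  assert (Hq : N * ((M * (M + 1) - K) / K) <= 8 * j).
  { apply Rmult_le_reg_r with K; [assumption|].
    replace (N * ((M * (M + 1) - K) / K) * K) with (N * (M * (M + 1) - K)) by (field; lra).
    apply triangle_quotient_bound; assumption. }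
  nra.
Qed.

(* The logarithmic contradiction of the odd case: a growth inequality
   (s-1)^(2M) <= (t+1)^(2N), where (s-1)^2 ~ ac and (t+1)^2 ~ bc, is incompatible
   with the congruence information a M(M+1) >= b (N(N+1) - (M-N)) when N < M <= 2N
   and ac is large. *)
Lemma odd_log_contradiction (a b c s t : R) (M N : nat) :
  (N < M <= 2 * N)%nat -> 0 < a -> 0 < b -> 0 < c -> 1 < s -> 0 < t ->
  ((s - 1) ^ 2) ^ M <= ((t + 1) ^ 2) ^ N ->
  a * INR M * (INR M + 1) >= b * (INR N * (INR N + 1) - (INR M - INR N)) ->
  INR M * (a * c - (s - 1) ^ 2) <= (s - 1) ^ 2 / 2 ->
  INR N * ((t + 1) ^ 2 - b * c) <= b * c / 2 ->
  10000000000 <= a * c -> False.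
Proof.
  intros [HNM HM2N] Ha Hb Hc Hs Ht Hpow Htri Hclose_s Hclose_t Hac.
  set (j := INR M - INR N) in *.
  assert (Hj : 1 <= j).
  { unfold j. rewrite <- minus_INR by lia. apply (le_INR 1). lia. }
  assert (HjN : j <= INR N).
  { unfold j. rewrite <- minus_INR by lia. apply le_INR. lia. }
  assert (Hs1 : 0 < (s - 1) ^ 2) by (apply pow_lt; lra).
  assert (Ht1 : 0 < (t + 1) ^ 2) by (apply pow_lt; lra).
  assert (L1 : INR M * ln ((s - 1) ^ 2) <= INR N * ln ((t + 1) ^ 2)).
  { rewrite <- !ln_pow by assumption. apply ln_le_mono; [apply pow_lt|]; assumption. }
  assert (L2 : INR M * ln (a * c) <= INR M * ln ((s - 1) ^ 2) + 1 / 2)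
    by (apply mul_ln_le; [apply pos_INR | | apply Rmult_lt_0_compat |]; assumption).
  assert (L3 : INR N * ln ((t + 1) ^ 2) <= INR N * ln (b * c) + 1 / 2)
    by (apply mul_ln_le; [apply pos_INR | apply Rmult_lt_0_compat | |]; assumption).
  assert (L4 : INR N * ln b <= INR N * ln a + 8 * j).
  { apply ln_ratio_bound; try assumption. unfold j. replace (INR N + (INR M - INR N)) with (INR M) by ring.
    assumption. }
  pose proof (ln_ge_10 _ Hac) as L5.
  rewrite !ln_mult in L2, L3, L5 by assumption.
  assert (HM : INR M = INR N + j) by (unfold j; ring).
  rewrite HM in L2. nra.
Qed.

Open Scope Z_scope.

Lemma common_sign (z0 z1 p q : Z) :
  Z.abs z0 = p -> Z.abs z1 = q -> z0 * z1 > 0 ->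
  exists e, (e = 1 \/ e = -1) /\ z0 = e * p /\ z1 = e * q.
Proof.
  intros Hp Hq Hpos.
  destruct (Z_lt_ge_dec z0 0).
  - exists (-1). assert (z1 < 0) by nia. lia.
  - exists 1. assert (z0 > 0) by lia. assert (z1 > 0) by nia. lia.
Qed.

Lemma even_meeting_congruence (a b c s t e : Z) (M N : nat) :
  s * s = a * c + 4 -> t * t = b * c + 4 -> c <> 0 ->
  vseq s c (2 * e) 2 (2 * M) = vseq t c (2 * e) 2 (2 * N) ->
  exists q, 2 * (e * (a * Z.of_nat M * Z.of_nat M - b * Z.of_nat N * Z.of_nat N)
                 + s * Z.of_nat M - t * Z.of_nat N) = c * q.
Proof.
  intros Hs2 Ht2 Hc Heq.
  assert (Hz : zrec s (2 * (2 * e)) (s * (2 * e) + c * 2) (2 * M)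
             = zrec t (2 * (2 * e)) (t * (2 * e) + c * 2) (2 * N)).
  { apply eq_IZR. rewrite <- !vseq_double, Heq. reflexivity. }
  destruct (zrec_even_cong s a c (2 * e) 2 Hs2 M) as [q1 Hq1].
  destruct (zrec_even_cong t b c (2 * e) 2 Ht2 N) as [q2 Hq2].
  exists (q2 - q1). apply Z.mul_reg_l with c; [assumption|].
  rewrite Hq1, Hq2 in Hz. nia.
Qed.

Lemma odd_meeting_congruence (a b c r s t e : Z) (M N : nat) :
  s * s = a * c + 4 -> t * t = b * c + 4 -> c <> 0 ->
  vseq s c (e * t) r (2 * M + 1) = vseq t c (e * s) r (2 * N + 1) ->
  exists q, e * s * t * (a * tri M - b * tri N) + 2 * r * (Z.of_nat M - Z.of_nat N) = c * q.
Proof.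
  intros Hs2 Ht2 Hc Heq.
  assert (Hz : zrec s (2 * (e * t)) (s * (e * t) + c * r) (2 * M + 1)
             = zrec t (2 * (e * s)) (t * (e * s) + c * r) (2 * N + 1)).
  { apply eq_IZR. rewrite <- !vseq_double, Heq. reflexivity. }
  destruct (zrec_odd_cong s a c (e * t) r Hs2 M) as [q1 Hq1].
  destruct (zrec_odd_cong t b c (e * s) r Ht2 N) as [q2 Hq2].
  exists (q2 - q1). apply Z.mul_reg_l with c; [assumption|].
  rewrite Hq1, Hq2 in Hz. nia.
Qed.

Open Scope R_scope.

Lemma le_div_sqrt (x k B C : R) :
  0 <= x -> 0 < k -> 0 < B -> 0 <= C ->
  x <= k * / sqrt B * sqrt C -> x * x * B <= k * k * C.
Proof.
  intros Hx Hk HB HC Hle.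
  assert (HsB : 0 < sqrt B) by (apply sqrt_lt_R0; lra).
  pose proof (sqrt_sqrt B (Rlt_le _ _ HB)) as EB.
  pose proof (sqrt_sqrt C HC) as EC.
  assert (Hmul : x * sqrt B <= k * sqrt C).
  { apply Rmult_le_compat_r with (r := sqrt B) in Hle; [|lra].
    replace (k * / sqrt B * sqrt C * sqrt B) with (k * sqrt C) in Hle by (field; lra). exact Hle. }
  assert (Hsq : (x * sqrt B) * (x * sqrt B) <= (k * sqrt C) * (k * sqrt C))
    by (apply Rmult_le_compat; try assumption; apply Rmult_le_pos; try lra; apply sqrt_pos).
  replace ((x * sqrt B) * (x * sqrt B)) with (x * x * (sqrt B * sqrt B)) in Hsq by ring.
  replace ((k * sqrt C) * (k * sqrt C)) with (k * k * (sqrt C * sqrt C)) in Hsq by ring.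
  rewrite EB, EC in Hsq. exact Hsq.
Qed.

(* The even-case bound n <= 0.340134 sqrt(c/b), in integer form. *)
Lemma even_bound_int (n : nat) (b c : Z) : (0 < b)%Z -> (0 < c)%Z ->
  INR n <= 340134 / 1000000 * / sqrt (IZR b) * sqrt (IZR c) ->
  (1000000000000 * (Z.of_nat n * Z.of_nat n) * b <= 115691137956 * c)%Z.
Proof.
  intros Hb Hc Hle. apply IZR_lt in Hb, Hc.
  apply le_div_sqrt in Hle; [|apply pos_INR | lra | lra | lra].
  apply le_IZR. rewrite !mult_IZR, <- INR_IZR_INZ. lra.
Qed.

(* The odd-case bound n <= 0.09226 c^(1/4) / sqrt b, in integer form. *)
Lemma odd_bound_int (n : nat) (b c : Z) : (0 < b)%Z -> (0 < c)%Z ->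
  INR n <= 9226 / 100000 * / sqrt (IZR b) * sqrt (sqrt (IZR c)) ->
  (100000000000000000000 * ((Z.of_nat n * Z.of_nat n) * (Z.of_nat n * Z.of_nat n)) * (b * b)
     <= 7245257099093776 * c)%Z.
Proof.
  intros Hb Hc Hle. apply IZR_lt in Hb, Hc.
  apply le_div_sqrt in Hle; [|apply pos_INR | lra | lra | apply sqrt_pos].
  (* now n^2 b <= k^2 sqrt c; square once more *)
  assert (HX : 0 <= INR n * INR n * IZR b)
    by (apply Rmult_le_pos; [apply Rmult_le_pos; apply pos_INR | lra]).
  assert (Hsq : (INR n * INR n * IZR b) * (INR n * INR n * IZR b)
                <= (9226 / 100000 * (9226 / 100000) * sqrt (IZR c)) * (9226 / 100000 * (9226 / 100000) * sqrt (IZR c)))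
    by (apply Rmult_le_compat; assumption).
  replace ((9226 / 100000 * (9226 / 100000) * sqrt (IZR c)) * (9226 / 100000 * (9226 / 100000) * sqrt (IZR c)))
    with ((9226 / 100000) ^ 4 * (sqrt (IZR c) * sqrt (IZR c))) in Hsq by ring.
  rewrite sqrt_sqrt in Hsq by lra.
  apply le_IZR. rewrite !mult_IZR, <- INR_IZR_INZ. lra.
Qed.

Open Scope Z_scope.

Lemma tri_le_3sq (m n T : Z) : 0 <= m <= 2 * n -> 2 * T = m * (m + 1) -> 0 <= T <= 3 * (n * n).
Proof.
  intros Hm HT.
  assert (m * (m + 1) <= (2 * n) * (2 * n + 1)) by (apply Z.mul_le_mono_nonneg; lia).
  assert (0 <= m * (m + 1)) by (apply Z.mul_nonneg_nonneg; lia). nia.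
Qed.

Lemma tri_le_sq (n T : Z) : 1 <= n -> 2 * T = n * (n + 1) -> 0 <= T <= n * n.
Proof. intros Hn HT. nia. Qed.

Lemma tri_gap (m n TM TN : Z) :
  0 <= m < n -> 2 * TM = m * (m + 1) -> 2 * TN = n * (n + 1) -> n <= TN - TM.
Proof.
  intros Hmn HTM HTN.
  assert (m * (m + 1) <= (n - 1) * n) by (apply Z.mul_le_mono_nonneg; lia). nia.
Qed.

Ltac push_IZR H :=
  repeat (rewrite mult_IZR in H || rewrite plus_IZR in H || rewrite minus_IZR in H).

(* The integer data of the theorem (a = a2, r = r2, s = s2) together with the size
   hypotheses b > 10^5, c > 0.56 b^3, c > 0.001 a^2 b^2. *)
Record setting (a b c r s t : Z) : Prop := {
  setting_a : 2 <= a;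
  setting_ab : a < b;
  setting_b : 100000 < b;
  setting_c1 : 56 * (b * b * b) < 100 * c;
  setting_c2 : a * a * (b * b) < 1000 * c;
  setting_r : 0 < r;
  setting_s : 0 < s;
  setting_t : 0 < t;
  setting_r2 : r * r = a * b + 4;
  setting_s2 : s * s = a * c + 4;
  setting_t2 : t * t = b * c + 4 }.

Section Setting.
Variables a b c r s t : Z.
Hypothesis HS : setting a b c r s t.
Let Ha : 2 <= a := setting_a _ _ _ _ _ _ HS.
Let Hab : a < b := setting_ab _ _ _ _ _ _ HS.
Let Hb : 100000 < b := setting_b _ _ _ _ _ _ HS.
Let Hc1 : 56 * (b * b * b) < 100 * c := setting_c1 _ _ _ _ _ _ HS.
Let Hc2 : a * a * (b * b) < 1000 * c := setting_c2 _ _ _ _ _ _ HS.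
Let Hr : 0 < r := setting_r _ _ _ _ _ _ HS.
Let Hs : 0 < s := setting_s _ _ _ _ _ _ HS.
Let Ht : 0 < t := setting_t _ _ _ _ _ _ HS.
Let Hr2 : r * r = a * b + 4 := setting_r2 _ _ _ _ _ _ HS.
Let Hs2 : s * s = a * c + 4 := setting_s2 _ _ _ _ _ _ HS.
Let Ht2 : t * t = b * c + 4 := setting_t2 _ _ _ _ _ _ HS.

Lemma c_large : 1000000000 * b < c.
Proof.
  assert (10000000000 * b <= b * b * b) by (apply Z.mul_le_mono_nonneg_r; nia). lia.
Qed.

Lemma s_lt_t : s < t.
Proof.
  destruct (Z_lt_ge_dec s t) as [|Hts]; [assumption|].
  assert (t * t <= s * s) by (apply Z.square_le_mono_nonneg; lia).
  pose proof c_large. assert (a * c < b * c) by (apply Z.mul_lt_mono_pos_r; lia). lia.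
Qed.

Lemma s_ge_3 : 3 <= s.
Proof.
  destruct (Z_lt_ge_dec s 3) as [Hs3|]; [|lia].
  assert (s * s <= 2 * 2) by (apply Z.square_le_mono_nonneg; lia).
  pose proof c_large. assert (2 * c <= a * c) by (apply Z.mul_le_mono_nonneg_r; lia). lia.
Qed.

Lemma t_small : 10000 * t < c.
Proof.
  pose proof c_large.
  apply Z.square_lt_simpl_nonneg; [lia|].
  assert (1000000000 * b * c < c * c) by (apply Z.mul_lt_mono_pos_r; lia).
  assert (100000 * c <= b * c) by (apply Z.mul_le_mono_nonneg_r; lia).
  replace (10000 * t * (10000 * t)) with (100000000 * (t * t)) by ring. lia.
Qed.

(* t + 1 <= (s - 1)^2: one step of the t-recurrence is at most two of the s-recurrence. *)
Lemma t_le_s_sq : t + 1 <= (s - 1) * (s - 1).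
Proof.
  pose proof s_lt_t. pose proof c_large. pose proof t_small.
  assert (2 * c <= a * c) by (apply Z.mul_le_mono_nonneg_r; lia).
  replace ((s - 1) * (s - 1)) with (s * s - 2 * s + 1) by ring. lia.
Qed.

(* s (t + 2) <= c r; this uses the hypothesis c > 0.001 a^2 b^2. *)
Lemma st_le_cr : s * (t + 2) <= c * r.
Proof.
  pose proof c_large. pose proof s_lt_t. pose proof t_small.
  apply Z.square_le_simpl_nonneg; [nia|].
  assert (Hat : 10 * (a * t) <= c).
  { apply Z.square_le_simpl_nonneg; [lia|].
    replace (10 * (a * t) * (10 * (a * t))) with (100 * (a * a) * (t * t)) by ring. rewrite Ht2.
    assert (100000 * (a * a * b) <= a * a * (b * b)).
    { replace (a * a * (b * b)) with ((a * a * b) * b) by ring.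
      rewrite (Z.mul_comm 100000). apply Z.mul_le_mono_nonneg_l; nia. }
    assert (100 * (a * a * b) * c < c * c) by (apply Z.mul_lt_mono_pos_r; lia).
    nia. }
  replace (c * r * (c * r)) with (c * c * (r * r)) by ring.
  replace (s * (t + 2) * (s * (t + 2))) with (s * s * (t * t + 4 * t + 4)) by ring.
  rewrite Hs2, Ht2, Hr2.
  assert (a * c * t * 10 <= c * c) by nia.
  assert (b * c * 10000 <= c * c) by nia.
  assert (a * c * 1000 <= c * c) by nia.
  nia.
Qed.

(* In the even case the two indices are m = M and n = N (halves of 2M, 2N);
   under the assumed upper bound on n all terms of the congruence are < c. *)
Section EvenCase.
Variables m n : Z.
Hypothesis Hm : 0 <= m <= 2 * n.
Hypothesis Hn : 2 <= n.
Hypothesis Hsmall : 4000000000000 * (b * n * n) <= 115691137956 * c.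

Lemma even_size_bounds :
  0 <= a * m * m <= 4 * (b * n * n) /\ 10000 * (b * n * n) <= 290 * c /\
  0 <= s * m /\ 10000 * (s * m) <= 3402 * c /\ 0 <= t * n /\ 10000 * (t * n) <= 1710 * c.
Proof.
  pose proof c_large.
  assert (Hmm : 0 <= m * m <= 4 * (n * n)) by nia.
  assert (Hamm : 0 <= a * m * m <= 4 * (b * n * n)).
  { split; [nia|].
    assert (a * (m * m) <= b * (m * m)) by (apply Z.mul_le_mono_nonneg_r; lia).
    assert (b * (m * m) <= b * (4 * (n * n))) by (apply Z.mul_le_mono_nonneg_l; lia).
    lia. }
  assert (Hsm0 : 0 <= s * m) by (apply Z.mul_nonneg_nonneg; lia).
  assert (Htn0 : 0 <= t * n) by (apply Z.mul_nonneg_nonneg; lia).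
  assert (Hsm : 10000 * (s * m) <= 3402 * c).
  { apply Z.square_le_simpl_nonneg; [lia|].
    assert (Hsq : (s * m) * (s * m) <= 4 * c * (b * n * n)).
    { replace ((s * m) * (s * m)) with ((s * s) * (m * m)) by ring. rewrite Hs2.
      assert (a * c + 4 <= b * c) by nia.
      transitivity ((b * c) * (4 * (n * n))); [apply Z.mul_le_mono_nonneg|]; lia. }
    assert (c * (4000000000000 * (b * n * n)) <= c * (115691137956 * c))
      by (apply Z.mul_le_mono_nonneg_l; lia).
    lia. }
  assert (Htn : 10000 * (t * n) <= 1710 * c).
  { apply Z.square_le_simpl_nonneg; [lia|].
    assert (Hsq : (t * n) * (t * n) = c * (b * n * n) + 4 * (n * n)).
    { replace ((t * n) * (t * n)) with ((t * t) * (n * n)) by ring. rewrite Ht2. ring. }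
    assert (100000 * (n * n) <= b * (n * n)) by (apply Z.mul_le_mono_nonneg_r; lia).
    assert (c * (4000000000000 * (b * n * n)) <= c * (115691137956 * c))
      by (apply Z.mul_le_mono_nonneg_l; lia).
    assert (c <= c * c) by nia.
    lia. }
  repeat split; lia.
Qed.

Lemma even_congruence_exact (e q : Z) :
  e = 1 \/ e = -1 ->
  2 * (e * (a * m * m - b * n * n) + s * m - t * n) = c * q ->
  t * n = s * m + e * (a * m * m - b * n * n).
Proof.
  intros He Hq.
  destruct even_size_bounds as [Ham [Hbn [Hsm0 [Hsm [Htn0 Htn]]]]].
  assert (-c < c * q < c) by (rewrite <- Hq; destruct He; subst e; lia).
  assert (q = 0) by nia. subst q. lia.
Qed.

(* Squaring t n = s m + e(a m^2 - b n^2) and using s^2 = ac + 4, t^2 = bc + 4. *)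
Lemma even_square_identity (e : Z) :
  e * e = 1 -> t * n = s * m + e * (a * m * m - b * n * n) ->
  (b * n * n - a * m * m) * (c + 2 * e * s * m - (b * n * n - a * m * m)) = 4 * (m * m) - 4 * (n * n).
Proof.
  intros He Hlin.
  assert (Hsq : (t * t) * (n * n) = (s * s) * (m * m) + 2 * e * (s * m) * (a * m * m - b * n * n)
                  + (e * e) * ((a * m * m - b * n * n) * (a * m * m - b * n * n))).
  { transitivity ((t * n) * (t * n)); [ring|]. rewrite Hlin. ring. }
  rewrite Ht2, Hs2, He in Hsq. nia.
Qed.

Lemma even_case_impossible (e q : Z) :
  e = 1 \/ e = -1 ->
  2 * (e * (a * m * m - b * n * n) + s * m - t * n) = c * q -> False.
Proof.
  intros He Hq.
  destruct even_size_bounds as [Ham [Hbn [Hsm0 [Hsm [Htn0 Htn]]]]].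
  pose proof (even_congruence_exact e q He Hq) as Hlin.
  assert (He2 : e * e = 1) by (destruct He; subst e; reflexivity).
  pose proof (even_square_identity e He2 Hlin) as Hid.
  set (D := b * n * n - a * m * m) in Hid.
  set (Q := c + 2 * e * s * m - D) in Hid.
  assert (HQ : 2000 * c < 10000 * Q) by (unfold Q, D; destruct He; subst e; lia).
  assert (m * m <= (2 * n) * (2 * n)) by (apply Z.square_le_mono_nonneg; lia).
  assert (0 <= m * m) by (apply Z.square_nonneg).
  assert (100000 * (n * n) <= b * (n * n)) by (apply Z.mul_le_mono_nonneg_r; lia).
  destruct (Z.eq_dec D 0) as [HD|HD].
  - (* D = 0 forces m = n and then a = b *)
    rewrite HD in Hid.
    assert (Hsq : m * m = n * n) by lia.
    assert (m <= n) by (apply Z.square_le_simpl_nonneg; lia).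
    assert (n <= m) by (apply Z.square_le_simpl_nonneg; lia).
    assert (Hmn' : m = n) by lia. subst m. unfold D in HD.
    assert (Hzero : (b - a) * (n * n) = 0) by lia.
    apply Z.mul_eq_0 in Hzero. lia.
  - (* otherwise |D Q| >= Q > c/5 > |4 (m^2 - n^2)| *)
    destruct (Z_lt_ge_dec D 0).
    + assert ((D + 1) * Q <= 0) by (apply Z.mul_nonpos_nonneg; lia). lia.
    + assert (0 <= (D - 1) * Q) by (apply Z.mul_nonneg_nonneg; lia). lia.
Qed.

End EvenCase.

Lemma r_lt_b : r < b.
Proof.
  destruct (Z_lt_ge_dec r b) as [|Hrb]; [assumption|].
  assert (b * b <= r * r) by (apply Z.square_le_mono_nonneg; lia).
  assert (a * b <= (b - 1) * b) by (apply Z.mul_le_mono_nonneg_r; lia). lia.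
Qed.

(* Multiplying e s t D + 2 r j = c q by its conjugate e s t D - 2 r j and using
   s^2 t^2 = (ac + 4)(bc + 4) = 16 (mod c). *)
Lemma conjugate_congruence (e q D j : Z) :
  e * e = 1 -> e * s * t * D + 2 * r * j = c * q ->
  exists q', 16 * (D * D) - 4 * (r * r) * (j * j) = c * q'.
Proof.
  intros He Hq.
  exists (q * (e * s * t * D - 2 * r * j) - (a * b * c + 4 * a + 4 * b) * (D * D)).
  assert (Hconj : (e * s * t * D + 2 * r * j) * (e * s * t * D - 2 * r * j)
                  = (e * e) * (s * s) * (t * t) * (D * D) - 4 * (r * r) * (j * j)) by ring.
  rewrite Hq, He, Hs2, Ht2 in Hconj. lia.
Qed.

(* If m < n then D = a T(m) - b T(n) satisfies -D >= b n > r n >= r |m - n|,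
   so 4 D^2 = (r (m - n))^2 is impossible. *)
Lemma no_equal_squares_below (m n TM TN : Z) :
  0 <= m < n -> 2 * TM = m * (m + 1) -> 2 * TN = n * (n + 1) ->
  4 * ((a * TM - b * TN) * (a * TM - b * TN)) <> (r * (m - n)) * (r * (m - n)).
Proof.
  intros Hmn HTM HTN Hsq.
  pose proof r_lt_b as Hrb.
  set (D := a * TM - b * TN) in *. set (j := m - n) in *.
  assert (Hgap : n <= TN - TM) by (apply (tri_gap m n); lia).
  assert (HTM0 : 0 <= TM) by nia.
  assert (HbD : b * n <= - D).
  { assert (a * TM <= b * TM) by (apply Z.mul_le_mono_nonneg_r; lia).
    assert (b * n <= b * (TN - TM)) by (apply Z.mul_le_mono_nonneg_l; lia). unfold D. lia. }
  assert (0 < b * n) by (apply Z.mul_pos_pos; lia).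
  assert ((b * n) * (b * n) <= (- D) * (- D)) by (apply Z.square_le_mono_nonneg; lia).
  assert ((r * j) * (r * j) <= (r * n) * (r * n)).
  { replace ((r * j) * (r * j)) with ((r * r) * (- j * - j)) by ring.
    replace ((r * n) * (r * n)) with ((r * r) * (n * n)) by ring.
    apply Z.mul_le_mono_nonneg_l; [apply Z.square_nonneg | apply Z.square_le_mono_nonneg; unfold j; lia]. }
  assert ((r * n) * (r * n) < (b * n) * (b * n)).
  { apply Z.square_lt_mono_nonneg; [apply Z.mul_nonneg_nonneg | apply Z.mul_lt_mono_pos_r]; lia. }
  replace ((- D) * (- D)) with (D * D) in * by ring. lia.
Qed.

(* The odd case: indices m = M and n = N (from 2M + 1, 2N + 1), under the assumed
   upper bound on n; TM = m(m+1)/2 and TN = n(n+1)/2 are triangular numbers. *)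
Section OddCase.
Variables m n : Z.
Hypothesis Hm : 0 <= m <= 2 * n.
Hypothesis Hn : 2 <= n.
Hypothesis Hsmall :
  100000000000000000000 * ((2 * n + 1) * (2 * n + 1) * ((2 * n + 1) * (2 * n + 1))) * (b * b)
  <= 7245257099093776 * c.

Lemma odd_bn2_small : 1600000000000000000000 * ((b * (n * n)) * (b * (n * n))) <= 7245257099093776 * c.
Proof.
  assert (Hn4 : 16 * ((n * n) * (n * n)) <= (2 * n + 1) * (2 * n + 1) * ((2 * n + 1) * (2 * n + 1))).
  { assert ((2 * n) * (2 * n) <= (2 * n + 1) * (2 * n + 1)) by (apply Z.square_le_mono_nonneg; lia).
    assert ((2 * n) * (2 * n) * ((2 * n) * (2 * n)) <= (2 * n + 1) * (2 * n + 1) * ((2 * n + 1) * (2 * n + 1)))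
      by (apply Z.mul_le_mono_nonneg; lia).
    lia. }
  assert (16 * ((n * n) * (n * n)) * (b * b) <= (2 * n + 1) * (2 * n + 1) * ((2 * n + 1) * (2 * n + 1)) * (b * b))
    by (apply Z.mul_le_mono_nonneg_r; [apply Z.square_nonneg | assumption]).
  lia.
Qed.

(* Both terms of the conjugate congruence are smaller than c, so they are equal. *)
Lemma odd_squares_equal (TM TN e q : Z) :
  2 * TM = m * (m + 1) -> 2 * TN = n * (n + 1) -> e * e = 1 -> e * s * t * (a * TM - b * TN) + 2 * r * (m - n) = c * q ->
  4 * ((a * TM - b * TN) * (a * TM - b * TN)) = (r * (m - n)) * (r * (m - n)).
Proof.
  intros HTM HTN He Hq.
  destruct (conjugate_congruence e q _ _ He Hq) as [q' Hq'].
  set (D := a * TM - b * TN) in *. set (j := m - n) in *. set (X := b * (n * n)).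
  pose proof c_large. pose proof r_lt_b. pose proof odd_bn2_small.
  assert (HX : 0 <= X) by (unfold X; apply Z.mul_nonneg_nonneg; [|apply Z.square_nonneg]; lia).
  pose proof (tri_le_3sq m n TM Hm HTM) as HTM'.
  pose proof (tri_le_sq n TN ltac:(lia) HTN) as HTN'.
  assert (HaTM : 0 <= a * TM <= 3 * X).
  { split; [apply Z.mul_nonneg_nonneg; lia|].
    assert (a * TM <= b * TM) by (apply Z.mul_le_mono_nonneg_r; lia).
    assert (b * TM <= b * (3 * (n * n))) by (apply Z.mul_le_mono_nonneg_l; lia). unfold X; lia. }
  assert (HbTN : 0 <= b * TN <= X)
    by (unfold X; split; [apply Z.mul_nonneg_nonneg | apply Z.mul_le_mono_nonneg_l]; lia).
  assert (HD : D * D <= (3 * X) * (3 * X)).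
  { unfold D. clear -HaTM HbTN HX. nia. }
  assert (Hrj : (r * j) * (r * j) <= X * X).
  { assert (j * j <= n * n) by (unfold j; clear -Hm Hn; nia).
    assert (r * r <= b * b) by (apply Z.square_le_mono_nonneg; lia).
    assert (n * n <= (n * n) * (n * n)) by (clear -Hn; nia).
    replace ((r * j) * (r * j)) with ((r * r) * (j * j)) by ring.
    transitivity ((b * b) * (n * n)); [apply Z.mul_le_mono_nonneg; try lia; apply Z.square_nonneg|].
    unfold X. replace (b * (n * n) * (b * (n * n))) with ((b * b) * ((n * n) * (n * n))) by ring.
    apply Z.mul_le_mono_nonneg_l; [apply Z.square_nonneg | assumption]. }
  assert (Hq0 : q' = 0).
  { assert (0 <= D * D) by apply Z.square_nonneg.
    assert (0 <= (r * j) * (r * j)) by apply Z.square_nonneg.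
    assert (Hcq : -c < c * q' < c) by lia.
    assert (Hc0 : 0 < c) by lia. clear -Hcq Hc0. nia. }
  subst q'. lia.
Qed.

(* From 4 D^2 = (r j)^2 with D = a TM - b TN and j = m - n: necessarily m > n, and
   2D >= -r j >= -b j, i.e. a m (m+1) >= b (n (n+1) - j). *)
Lemma odd_index_order (TM TN e q : Z) :
  2 * TM = m * (m + 1) -> 2 * TN = n * (n + 1) -> e * e = 1 -> e * s * t * (a * TM - b * TN) + 2 * r * (m - n) = c * q ->
  n < m /\ a * m * (m + 1) >= b * (n * (n + 1) - (m - n)).
Proof.
  intros HTM HTN He Hq.
  pose proof (odd_squares_equal TM TN e q HTM HTN He Hq) as Hsq.
  pose proof r_lt_b as Hrb.
  set (D := a * TM - b * TN) in *. set (j := m - n) in *.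
  destruct (Z_lt_ge_dec j 0) as [Hneg | Hnonneg]; [|destruct (Z.eq_dec j 0) as [Hzero | Hpos]].
  -
    exfalso. apply (no_equal_squares_below m n TM TN); unfold j in *; lia.
  - (* m = n: then D = (a - b) TN = 0, impossible *)
    exfalso. rewrite Hzero in Hsq.
    assert (HD : D * D = 0) by lia. apply Z.mul_eq_0 in HD.
    assert (Hmn : m = n) by (unfold j in Hzero; lia). subst m.
    assert (TM = TN) by lia. subst TM. unfold D in HD.
    assert (Hab0 : (a - b) * TN = 0) by lia. apply Z.mul_eq_0 in Hab0. lia.
  - split; [unfold j in *; lia|].
    assert (H2D : 2 * D >= - (r * j)).
    { destruct (Z_lt_ge_dec (2 * D) (- (r * j))) as [Hlt|]; [|assumption].
      assert (0 <= r * j) by (apply Z.mul_nonneg_nonneg; lia).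
      pose proof (Z.square_lt_mono_nonneg (r * j) (- (2 * D)) ltac:(lia) ltac:(lia)) as Hcontra.
      replace (- (2 * D) * - (2 * D)) with (4 * (D * D)) in Hcontra by ring. lia. }
    assert (r * j <= b * j) by (apply Z.mul_le_mono_nonneg_r; lia).
    assert (a * m * (m + 1) = a * (2 * TM)) by (rewrite HTM; ring).
    assert (b * (n * (n + 1)) = b * (2 * TN)) by (rewrite HTN; ring).
    unfold D, j in *. lia.
Qed.

(* With n this small, (s-1)^2 approximates ac and (t+1)^2 approximates bc to
   relative precision 1/(2m) and 1/(2n): 2m(2s - 5) <= (s-1)^2, 2n(2t + 5) <= bc. *)
Lemma odd_closeness :
  2 * m * (2 * s - 5) <= (s - 1) * (s - 1) /\ 2 * n * (5 + 2 * t) <= b * c.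
Proof.
  pose proof c_large. pose proof s_ge_3.
  set (P4 := (2 * n + 1) * (2 * n + 1) * ((2 * n + 1) * (2 * n + 1))) in Hsmall.
  assert (Hn4 : n * n * (n * n) <= P4).
  { assert (n * n <= (2 * n + 1) * (2 * n + 1)) by (apply Z.mul_le_mono_nonneg; lia).
    apply Z.mul_le_mono_nonneg; lia. }
  assert (HP4 : 0 <= P4) by (apply Z.mul_nonneg_nonneg; apply Z.square_nonneg).
  assert (P4 * 1 <= P4 * (b * b)) by (apply Z.mul_le_mono_nonneg_l; nia).
  assert (Hnc : 10000 * (n * n) <= c).
  { assert (n * n * 1 <= n * n * (n * n))
      by (apply Z.mul_le_mono_nonneg_l; [apply Z.square_nonneg | nia]). lia. }
  assert (Hns : 16 * n <= s).
  { apply Z.square_le_simpl_nonneg; [lia|].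
    assert (2 * c <= a * c) by (apply Z.mul_le_mono_nonneg_r; lia). lia. }
  split.
  - assert (2 * m * (2 * s - 5) <= 4 * n * (2 * s)) by (apply Z.mul_le_mono_nonneg; lia).
    assert (16 * n * s <= s * s) by (apply Z.mul_le_mono_nonneg_r; lia).
    assert (4 * s <= s * s) by (apply Z.mul_le_mono_nonneg_r; lia).
    lia.
  - assert (Hcbc : 1 * c <= b * c) by (apply Z.mul_le_mono_nonneg_r; lia).
    assert (Hnn : 0 <= n * n) by apply Z.square_nonneg.
    assert (Hbc : 72 * (n * n) <= b * c) by lia.
    assert (Hnt : 6 * (n * t) <= b * c).
    { apply Z.square_le_simpl_nonneg; [lia|].
      replace (6 * (n * t) * (6 * (n * t))) with (36 * (n * n) * (t * t)) by ring. rewrite Ht2.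
      assert (36 * (n * n) * (b * c + 4) <= 36 * (n * n) * (2 * (b * c)))
        by (apply Z.mul_le_mono_nonneg_l; lia).
      assert (72 * (n * n) * (b * c) <= (b * c) * (b * c)) by (apply Z.mul_le_mono_nonneg_r; lia).
      lia. }
    assert (5 <= t) by (pose proof s_lt_t; lia).
    assert (n * 5 <= n * t) by (apply Z.mul_le_mono_nonneg_l; lia). lia.
Qed.

End OddCase.

Open Scope R_scope.

Lemma setting_real_bounds :
  3 <= IZR s /\ IZR s < IZR t /\ IZR t + 1 <= (IZR s - 1) ^ 2 /\ 2 * IZR t + 2 <= IZR c.
Proof.
  pose proof s_ge_3 as Hs3.
  pose proof s_lt_t as Hst.
  pose proof t_le_s_sq as Hts.
  pose proof t_small as Htc.
  apply IZR_le in Hs3. apply IZR_lt in Hst.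
  apply IZR_le in Hts. rewrite plus_IZR, mult_IZR, minus_IZR in Hts.
  assert (Htc' : (2 * t + 2 <= c)%Z) by lia. apply IZR_le in Htc'.
  rewrite plus_IZR, mult_IZR in Htc'.
  repeat split; cbn; lra.
Qed.

(* Even case: v_{2M} = w_{2N} forces M <= 2N, because v grows at least like (s-1)^k,
   w at most like (t+1)^k, and (t+1) <= (s-1)^2. *)
Lemma even_index_bound (e : Z) (M N : nat) :
  (e = 1 \/ e = -1)%Z -> (1 <= N)%nat ->
  vseq s c (2 * e) 2 (2 * M) = vseq t c (2 * e) 2 (2 * N) -> (M <= 2 * N)%nat.
Proof.
  intros He HN Heq.
  destruct (le_lt_dec M (2 * N)) as [|HMN]; [assumption|exfalso].
  destruct setting_real_bounds as [Hs3 [Hst [Hts Htc]]].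
  set (f := fun k => vseq s c (2 * e) 2 (S k)).
  set (g := fun k => vseq t c (2 * e) 2 (S k)).
  assert (HeR : IZR e = 1 \/ IZR e = -1) by (destruct He as [-> | ->]; [left|right]; reflexivity).
  assert (Hf0 : f 0%nat = IZR s * IZR e + IZR c) by (unfold f, vseq; rewrite mult_IZR; cbn; field).
  assert (Hg0 : g 0%nat = IZR t * IZR e + IZR c) by (unfold g, vseq; rewrite mult_IZR; cbn; field).
  assert (Hv0 : forall p, vseq p c (2 * e) 2 0 = 2 * IZR e)
    by (intro p; unfold vseq; rewrite mult_IZR; reflexivity).
  assert (Hf1 : f 1%nat = IZR s * f 0%nat - 2 * IZR e) by (unfold f; rewrite vseq_SS, Hv0; reflexivity).
  assert (Hg1 : g 1%nat = IZR t * g 0%nat - 2 * IZR e) by (unfold g; rewrite vseq_SS, Hv0; reflexivity).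
  assert (Hmeet : f (2 * M - 1)%nat = g (2 * N - 1)%nat).
  { unfold f, g. replace (S (2 * M - 1)) with (2 * M)%nat by lia.
    replace (S (2 * N - 1)) with (2 * N)%nat by lia. exact Heq. }
  assert (HF0 : 2 <= f 0%nat) by (rewrite Hf0; destruct HeR as [-> | ->]; lra).
  assert (HG0 : 2 <= g 0%nat) by (rewrite Hg0; destruct HeR as [-> | ->]; lra).
  assert (Hpow : (IZR s - 1) ^ (2 * M - 1) * f 0%nat <= (IZR t + 1) ^ (2 * N - 1) * g 0%nat).
  { apply (rec_meet_bound f g); [intro k; apply vseq_SS | intro k; apply vseq_SS | lra | lra | lra | lra
      | rewrite Hf1; destruct HeR as [-> | ->]; lra
      | rewrite Hg1; destruct HeR as [-> | ->]; lra | exact Hmeet]. }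
  pose proof (pow_index_gap (IZR s - 1) (IZR t + 1) (f 0%nat) (g 0%nat) (2 * M - 1) (2 * N - 1) 1
    ltac:(lra) ltac:(lra) Hts ltac:(lra) ltac:(lia) Hpow) as Hgap.
  assert (HF : IZR c / 2 <= f 0%nat) by (rewrite Hf0; destruct HeR as [-> | ->]; lra).
  assert (HG : g 0%nat <= IZR c + IZR t) by (rewrite Hg0; destruct HeR as [-> | ->]; lra).
  (* but (t+1)(s-1) f_0 >= (t+1) c > c + t *)
  rewrite pow_1 in Hgap.
  assert (H2F : 2 * f 0%nat <= (IZR s - 1) * f 0%nat) by (apply Rmult_le_compat_r; lra).
  assert (Htc2 : (IZR t + 1) * IZR c <= (IZR t + 1) * ((IZR s - 1) * f 0%nat))
    by (apply Rmult_le_compat_l; lra).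
  nra.
Qed.

(* Odd case: v_{2M+1} = w_{2N+1}, where both sequences start (at index 1) from the
   same value h = (e s t + c r)/2; the growth rates give (s-1)^(2M) <= (t+1)^(2N),
   and hence M <= 2N. *)
Lemma odd_growth (e : Z) (M N : nat) :
  (e = 1 \/ e = -1)%Z ->
  vseq s c (e * t) r (2 * M + 1) = vseq t c (e * s) r (2 * N + 1) ->
  (IZR s - 1) ^ (2 * M) <= (IZR t + 1) ^ (2 * N) /\ (M <= 2 * N)%nat.
Proof.
  intros He Heq.
  destruct setting_real_bounds as [Hs3 [Hst [Hts Htc]]].
  set (f := fun k => vseq s c (e * t) r (S k)).
  set (g := fun k => vseq t c (e * s) r (S k)).
  set (h := (IZR s * (IZR e * IZR t) + IZR c * IZR r) / 2).
  assert (HeR : IZR e = 1 \/ IZR e = -1) by (destruct He as [-> | ->]; [left|right]; reflexivity).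
  assert (Hf0 : f 0%nat = h) by (unfold f, h, vseq; rewrite mult_IZR; reflexivity).
  assert (Hg0 : g 0%nat = h) by (unfold g, h, vseq; rewrite mult_IZR; cbn; field).
  assert (Hv0 : forall p q, vseq p c (e * q) r 0 = IZR e * IZR q)
    by (intros p q; unfold vseq; rewrite mult_IZR; reflexivity).
  assert (Hf1 : f 1%nat = IZR s * h - IZR e * IZR t)
    by (unfold f; rewrite vseq_SS, Hv0, <- Hf0; reflexivity).
  assert (Hg1 : g 1%nat = IZR t * h - IZR e * IZR s)
    by (unfold g; rewrite vseq_SS, Hv0, <- Hg0; reflexivity).
  assert (Hh : IZR s <= h /\ IZR e * IZR t <= h).
  { pose proof st_le_cr as Hcr.
    assert (Hr0 : (0 < c * r)%Z) by (pose proof c_large; apply Z.mul_pos_pos; lia).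
    apply IZR_le in Hcr. apply IZR_lt in Hr0. rewrite !mult_IZR, plus_IZR in Hcr. rewrite mult_IZR in Hr0.
    unfold h. destruct HeR as [-> | ->]; split; nra. }
  assert (Hpow : (IZR s - 1) ^ (2 * M) * h <= (IZR t + 1) ^ (2 * N) * h).
  { rewrite <- Hf0 at 1. rewrite <- Hg0.
    apply (rec_meet_bound f g); [intro k; apply vseq_SS | intro k; apply vseq_SS | lra | lra | lra | lra
      | rewrite Hf1, Hf0; lra | rewrite Hg1, Hg0; destruct HeR as [-> | ->]; lra | ].
    change (vseq s c (e * t) r (S (2 * M)) = vseq t c (e * s) r (S (2 * N))).
    replace (S (2 * M)) with (2 * M + 1)%nat by lia.
    replace (S (2 * N)) with (2 * N + 1)%nat by lia. exact Heq. }
  assert (Hpow1 : (IZR s - 1) ^ (2 * M) * 1 <= (IZR t + 1) ^ (2 * N) * 1).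
  { apply Rmult_le_reg_r with h; [lra|]. lra. }
  split; [lra|].
  destruct (le_lt_dec M (2 * N)) as [|HMN]; [assumption|exfalso].
  pose proof (pow_index_gap (IZR s - 1) (IZR t + 1) 1 1 (2 * M) (2 * N) 0
    ltac:(lra) ltac:(lra) Hts ltac:(lra) ltac:(lia) Hpow1) as Hgap.
  cbn in Hgap. lra.
Qed.

Lemma c_pos : (0 < c)%Z.
Proof. pose proof c_large. lia. Qed.

Lemma even_case (e : Z) (M N : nat) :
  (e = 1 \/ e = -1)%Z -> (2 <= N)%nat ->
  vseq s c (2 * e) 2 (2 * M) = vseq t c (2 * e) 2 (2 * N) ->
  INR (2 * N) > 340134 / 1000000 * / sqrt (IZR b) * sqrt (IZR c).
Proof.
  intros He HN Heq.
  apply Rnot_le_lt. intro Hle.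
  apply even_bound_int in Hle; [|lia | exact c_pos].
  pose proof (even_index_bound e M N He ltac:(lia) Heq) as HMN.
  destruct (even_meeting_congruence a b c s t e M N Hs2 Ht2 ltac:(pose proof c_pos; lia) Heq) as [q Hq].
  apply (even_case_impossible (Z.of_nat M) (Z.of_nat N)) with e q;
    [lia | lia | rewrite Nat2Z.inj_mul in Hle; lia | assumption | exact Hq].
Qed.

Lemma odd_small_index_impossible (M N : nat) (e q : Z) :
  (2 <= N)%nat -> (M <= 2 * N)%nat ->
  (100000000000000000000 * ((2 * Z.of_nat N + 1) * (2 * Z.of_nat N + 1)
     * ((2 * Z.of_nat N + 1) * (2 * Z.of_nat N + 1))) * (b * b) <= 7245257099093776 * c)%Z ->
  (IZR s - 1) ^ (2 * M) <= (IZR t + 1) ^ (2 * N) ->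
  (e * e = 1)%Z ->
  (e * s * t * (a * tri M - b * tri N) + 2 * r * (Z.of_nat M - Z.of_nat N) = c * q)%Z -> False.
Proof.
  intros HN HMN Hsmall Hpow He2 Hq.
  destruct (odd_index_order (Z.of_nat M) (Z.of_nat N) ltac:(lia) ltac:(lia) Hsmall
              (tri M) (tri N) e q (tri_double M) (tri_double N) He2 Hq) as [HNM Htri].
  destruct (odd_closeness (Z.of_nat M) (Z.of_nat N) ltac:(lia) ltac:(lia) Hsmall)
    as [Hclose_s Hclose_t].
  assert (HsR : IZR s * IZR s = IZR a * IZR c + 4) by (rewrite <- !mult_IZR, Hs2, plus_IZR; reflexivity).
  assert (HtR : IZR t * IZR t = IZR b * IZR c + 4) by (rewrite <- !mult_IZR, Ht2, plus_IZR; reflexivity).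
  assert (Hac : (10000000000 <= a * c)%Z)
    by (pose proof c_large; assert (2 * c <= a * c)%Z by (apply Z.mul_le_mono_nonneg_r; lia); lia).
  apply Z.ge_le in Htri. apply IZR_le in Htri, Hclose_s, Hclose_t, Hac.
  push_IZR Htri. push_IZR Hclose_s. push_IZR Hclose_t.
  rewrite <- !INR_IZR_INZ in Htri. rewrite <- INR_IZR_INZ in Hclose_s, Hclose_t.
  rewrite mult_IZR in Hac.
  rewrite !pow_mult in Hpow.
  apply (odd_log_contradiction (IZR a) (IZR b) (IZR c) (IZR s) (IZR t) M N).
  - lia.
  - apply (IZR_lt 0); lia.
  - apply (IZR_lt 0); lia.
  - apply (IZR_lt 0); exact c_pos.
  - apply (IZR_lt 1). pose proof s_ge_3. lia.
  - apply (IZR_lt 0); lia.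
  - exact Hpow.
  - apply Rle_ge. exact Htri.
  - replace (IZR a * IZR c) with (IZR s * IZR s - 4) by lra. cbn. lra.
  - replace ((IZR t + 1) ^ 2) with (IZR b * IZR c + 5 + 2 * IZR t) by (cbn; lra). lra.
  - exact Hac.
Qed.

Lemma odd_case (e : Z) (M N : nat) :
  (e = 1 \/ e = -1)%Z -> (2 <= N)%nat ->
  vseq s c (e * t) r (2 * M + 1) = vseq t c (e * s) r (2 * N + 1) ->
  INR (2 * N + 1) > 9226 / 100000 * / sqrt (IZR b) * sqrt (sqrt (IZR c)).
Proof.
  intros He HN Heq.
  apply Rnot_le_lt. intro Hle.
  apply odd_bound_int in Hle; [|lia | exact c_pos].
  rewrite Nat2Z.inj_add, Nat2Z.inj_mul in Hle.
  destruct (odd_growth e M N He Heq) as [Hpow HMN].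
  destruct (odd_meeting_congruence a b c r s t e M N Hs2 Ht2 ltac:(pose proof c_pos; lia) Heq) as [q Hq].
  assert (He2 : (e * e = 1)%Z) by (destruct He as [-> | ->]; reflexivity).
  exact (odd_small_index_impossible M N e q HN HMN Hle Hpow He2 Hq).
Qed.

End Setting.

Open Scope R_scope.

Lemma setting_of_hypotheses (a1 a2 b c r2 s2 t : Z) :
  (0 < a1 < a2)%Z -> (a2 < b)%Z ->
  (0 < r2)%Z /\ (a2 * b + 4 = r2 ^ 2)%Z -> (0 < s2)%Z /\ (a2 * c + 4 = s2 ^ 2)%Z ->
  (0 < t)%Z /\ (b * c + 4 = t ^ 2)%Z ->
  IZR c > 56 / 100 * IZR b ^ 3 -> IZR c > 1 / 1000 * IZR a2 ^ 2 * IZR b ^ 2 -> IZR b > 10 ^ 5 ->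
  setting a2 b c r2 s2 t.
Proof.
  intros Ha Hab [Hr Hr2] [Hs Hs2] [Ht Ht2] Hc1 Hc2 Hb.
  rewrite Z.pow_2_r in Hr2, Hs2, Ht2.
  constructor; try lia.
  - apply lt_IZR. cbn in Hb. lra.
  - apply lt_IZR. rewrite !mult_IZR. cbn in Hc1. lra.
  - apply lt_IZR. rewrite !mult_IZR. cbn in Hc2. lra.
Qed.

Theorem mainTheorem10
  (a1 a2 b c d r2 s2 t z : Z)
  (Hord : (0 < a1 < a2)%Z /\ (a2 < b < c)%Z /\ (c < d)%Z)
  (HQ1 : D4_quadruple a1 b c d)
  (HQ2 : D4_quadruple a2 b c d)
  (Hr2 : (0 < r2)%Z /\ (a2 * b + 4 = r2 ^ 2)%Z)
  (Hs2 : (0 < s2)%Z /\ (a2 * c + 4 = s2 ^ 2)%Z)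
  (Ht : (0 < t)%Z /\ (b * c + 4 = t ^ 2)%Z)
  (Hz : (0 < z)%Z /\ (c * d + 4 = z ^ 2)%Z)
  (Hc1 : IZR c > (56 / 100) * IZR b ^ 3)
  (Hc2 : IZR c > (1 / 1000) * IZR a2 ^ 2 * IZR b ^ 2)
  (Hb : IZR b > 10 ^ 5)
  (m n : nat)
  (Hn : (4 <= n)%nat)
  (Hrep : z_rep c r2 s2 t z m n) :
  Nat.even m = Nat.even n /\
  (Nat.odd n = true ->
     INR n > (9226 / 100000) * / sqrt (IZR b) * sqrt (sqrt (IZR c))) /\
  (Nat.even n = true ->
     INR n > (340134 / 1000000) * / sqrt (IZR b) * sqrt (IZR c)).
Proof.
  destruct Hord as [Ha [[Hab _] _]].
  pose proof (setting_of_hypotheses a1 a2 b c r2 s2 t Ha Hab Hr2 Hs2 Ht Hc1 Hc2 Hb) as HS.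
  destruct Hrep as [z0 [x0 [z1 [y1 [Hv [Hw [Heven | Hodd]]]]]]].
  -
    destruct Heven as [Hm [Hn2 [-> [-> [Hz0 [Hz1 Hsign]]]]]].
    destruct (common_sign z0 z1 2 2 Hz0 Hz1 Hsign) as [e [He [-> ->]]].
    destruct (proj1 (Nat.even_spec m) Hm) as [M ->].
    destruct (proj1 (Nat.even_spec n) Hn2) as [N ->].
    rewrite Hm, Hn2, <- Nat.negb_even, Hn2.
    split; [reflexivity | split; [discriminate | intros _]].
    rewrite (Z.mul_comm e 2) in Hv, Hw.
    apply (even_case a2 b c r2 s2 t HS e M N He); [lia | rewrite Hv in Hw; exact Hw].
  -
    destruct Hodd as [Hm [Hn2 [-> [-> [Hz0 [Hz1 Hsign]]]]]].
    destruct (common_sign z0 z1 t s2 Hz0 Hz1 Hsign) as [e [He [-> ->]]].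
    destruct (proj1 (Nat.odd_spec m) Hm) as [M ->].
    destruct (proj1 (Nat.odd_spec n) Hn2) as [N ->].
    rewrite <- !Nat.negb_odd, Hm, Hn2.
    split; [reflexivity | split; [intros _ | discriminate]].
    apply (odd_case a2 b c r2 s2 t HS e M N He); [lia | rewrite Hv in Hw; exact Hw].
Qed.
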